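(* Let $d\ge2$, let $\mathbf A,\mathbf B\in\overline{\mathbb Q}[t]$ be nonzero coprime polynomials, $\mathbf c=\mathbf A/\mathbf B$, let $\lambda\in\overline{\mathbb Q}^*$ and let $|\cdot|_v$ be an absolute value on $\overline{\mathbb Q}$. Let $m\le1\le M$ be positive real numbers with $m\le|\lambda|_v\le M$. Then for all integers $1\le n_0\le n$, $$\left|\frac{\log M_{n,v}(\lambda)}{d^n}-\frac{\log M_{n_0,v}(\lambda)}{d^{n_0}}\right|\le\frac{\log(2M)-\log m}{d^{n_0}(d-1)}.$$
   Context: The polynomials $\mathbf A_{\mathbf c,n},\mathbf B_{\mathbf c,n}$ are defined by: $\mathbf A_{\mathbf c,0}=\mathbf A$, $\mathbf B_{\mathbf c,0}=\mathbf B$; if $\mathbf A(0)\neq0$ then $\mathbf A_{\mathbf c,1}=\mathbf A^d+t\mathbf B^d$, $\mathbf B_{\mathbf c,1}=\mathbf A\mathbf B^{d-1}$, while if $\mathbf A(0)=0$ then $\mathbf A_{\mathbf c,1}=(\mathbf A^d+t\mathbf B^d)/t$, $\mathbf B_{\mathbf c,1}=\mathbf A\mathbf B^{d-1}/t$; for $n\ge1$, $\mathbf A_{\mathbf c,n+1}=\mathbf A_{\mathbf c,n}^d+t\mathbf B_{\mathbf c,n}^d$, $\mathbf B_{\mathbf c,n+1}=\mathbf A_{\mathbf c,n}\mathbf B_{\mathbf c,n}^{d-1}$. Then $M_{n,v}(\lambda)=\max\{|\mathbf A_{\mathbf c,n}(\lambda)|_v,|\mathbf B_{\mathbf c,n}(\lambda)|_v\}$.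 *)

From HB Require Import structures.
From mathcomp Require Import all_boot all_order all_algebra all_field.
From mathcomp Require Import all_classical all_reals all_analysis.
Set Implicit Arguments. Unset Strict Implicit. Unset Printing Implicit Defensive.
Import Order.TTheory GRing.Theory Num.Theory.
Local Open Scope ring_scope.

(* Qbar is modelled by algC (the algebraic closure of Q in MathComp). *)

Definition is_absolute_value (R : realType) (v : algC -> R) : Prop :=
  [/\ (forall x, 0 <= v x),
      (forall x, v x = 0 <-> x = 0),
      (forall x y, v (x * y) = v x * v y) &
      (forall x y, v (x + y) <= v x + v y)].

Definition ABstep (d : nat) (p : {poly algC} * {poly algC}) :
    {poly algC} * {poly algC} :=
  (p.1 ^+ d + 'X * p.2 ^+ d, p.1 * p.2 ^+ d.-1).

Definition ABfirst (d : nat) (A B : {poly algC}) : {poly algC} * {poly algC} :=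
  if A.[0] != 0 then ABstep d (A, B)
  else ((ABstep d (A, B)).1 %/ 'X, (ABstep d (A, B)).2 %/ 'X).

Fixpoint ABc (d : nat) (A B : {poly algC}) (n : nat) :
    {poly algC} * {poly algC} :=
  match n with
  | 0 => (A, B)
  | k.+1 => match k with
            | 0 => ABfirst d A B
            | _ => ABstep d (ABc d A B k)
            end
  end.

Definition Mnv (R : realType) (v : algC -> R) (d : nat) (A B : {poly algC})
    (n : nat) (lam : algC) : R :=
  Num.max (v (ABc d A B n).1.[lam]) (v (ABc d A B n).2.[lam]).

From HB Require Import structures.
From mathcomp Require Import all_boot all_order all_algebra all_field.
From mathcomp Require Import all_classical all_reals all_analysis.
From mathcomp Require Import ring lra.
Import Order.TTheory GRing.Theory Num.Theory.
Local Open Scope ring_scope.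

(* Write N_k = M_{k,v}(lambda) and c = m/(2M). For k >= 1 the pair evaluated at
   lambda is mapped by (a, b) |-> (a^d + lambda b^d, a b^(d-1)), and the
   (reverse) triangle inequality gives c N_k^d <= N_{k+1} <= 2M N_k^d <= (2M/m) N_k^d.
   Hence ln N_k / d^k moves by at most ln(2M/m) / d^(k+1) at each step, and
   summing the geometric tail from n0 on gives the bound. *)

Section MaxPowerBounds.
Variables (R : realType) (e : nat) (a b l P : R).
Hypotheses (a_ge0 : 0 <= a) (b_ge0 : 0 <= b).

Lemma max_le_pow_max :
  0 <= l -> P <= a ^+ e.+1 + l * b ^+ e.+1 ->
  Num.max P (a * b ^+ e) <= (1 + l) * Num.max a b ^+ e.+1.
Proof.
move=> l_ge0 P_le.
set N := Num.max a b.
have [aN bN] : a <= N /\ b <= N by rewrite !le_max !lexx orbT.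
have powN k x : 0 <= x -> x <= N -> x ^+ k <= N ^+ k.
  by move=> x_ge0 xN; apply: lerXn2r; rewrite ?nnegrE // (le_trans x_ge0).
have abN : a * b ^+ e <= N ^+ e.+1.
  by rewrite exprS ler_pM ?exprn_ge0 ?powN.
have lbN : l * b ^+ e.+1 <= l * N ^+ e.+1 by rewrite ler_wpM2l ?powN.
have := powN e.+1 a a_ge0 aN.
have : 0 <= l * N ^+ e.+1 by rewrite mulr_ge0 ?exprn_ge0 // (le_trans a_ge0).
by rewrite ge_max mulrDl mul1r => *; apply/andP; split; lra.
Qed.

Lemma pow_max_le_max (c : R) :
  0 <= c -> 2 * c <= l -> 2 * c * l <= 1 ->
  l * b ^+ e.+1 <= P + a ^+ e.+1 -> a ^+ e.+1 <= P + l * b ^+ e.+1 ->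
  c * Num.max a b ^+ e.+1 <= Num.max P (a * b ^+ e).
Proof.
move=> c_ge0 c_le_l cl_le1 lb_le a_le.
have P_le : P <= Num.max P (a * b ^+ e) by rewrite le_max lexx.
have ab_le : a * b ^+ e <= Num.max P (a * b ^+ e) by rewrite le_max lexx orbT.
have c2_le1 : 2 * c <= 1 by nra.
have be_ge0 : 0 <= b ^+ e := exprn_ge0 e b_ge0.
(* If a dominates, either a b^e is already large or l b^(e+1) is too small to
   cancel a^(e+1); if b dominates, either a >= c b or a^(e+1) <= c b^(e+1) is
   negligible against l b^(e+1). *)
have [b_le_a|a_lt_b] := leP b a.
  have bb_le_ab : b ^+ e.+1 <= a * b ^+ e by rewrite exprS ler_wpM2r.
  have [a_small|a_large] := leP (a ^+ e.+1) (2 * l * b ^+ e.+1).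
    have : c * a ^+ e.+1 <= (2 * c * l) * b ^+ e.+1.
      by apply: le_trans (ler_wpM2l c_ge0 a_small) _; rewrite !mulrA [c * 2]mulrC.
    have : (2 * c * l) * b ^+ e.+1 <= b ^+ e.+1.
      by rewrite ler_piMl // exprn_ge0.
    lra.
  have : c * a ^+ e.+1 <= a ^+ e.+1 / 2.
    by rewrite ler_pdivlMr // mulrAC ler_piMl ?exprn_ge0 // mulrC.
  lra.
have [cb_le_a|a_lt_cb] := leP (c * b) a.
  by apply: le_trans ab_le; rewrite exprS mulrA ler_wpM2r.
have ae_le : a ^+ e.+1 <= c * b ^+ e.+1.
  apply: (@le_trans _ _ ((c * b) ^+ e.+1)).
    by apply: lerXn2r; rewrite ?nnegrE ?mulr_ge0 // ltW.
  by rewrite exprMn ler_wpM2r ?exprn_ge0 // exprS ler_piMr // exprn_ile1 //; lra.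
have : 2 * c * b ^+ e.+1 <= l * b ^+ e.+1 by rewrite ler_wpM2r ?exprn_ge0.
lra.
Qed.

End MaxPowerBounds.

Section AbsoluteValue.
Variables (R : realType) (v : algC -> R).
Hypothesis hv : is_absolute_value v.

Lemma absv_ge0 x : 0 <= v x. Proof. by case: hv. Qed.

Lemma absvM x y : v (x * y) = v x * v y. Proof. by case: hv. Qed.

Lemma ler_absvD x y : v (x + y) <= v x + v y. Proof. by case: hv. Qed.

Lemma absv1 : v 1 = 1.
Proof.
have v1_neq0 : v 1 != 0.
  by apply/eqP; case: hv => _ v_eq0 _ _ /v_eq0/eqP; rewrite oner_eq0.
by apply: (mulIf v1_neq0); rewrite -absvM !mul1r.
Qed.

Lemma absvX x n : v (x ^+ n) = v x ^+ n.
Proof. by elim: n => [|n IHn]; rewrite ?absv1 // !exprS absvM IHn. Qed.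

Lemma absvN x : v (- x) = v x.
Proof.
have vN1 : v (-1) = 1.
  have := absvM (-1) (-1); rewrite mulrNN mulr1 absv1.
  have := absv_ge0 (-1); nra.
by rewrite -mulN1r absvM vN1 mul1r.
Qed.

Lemma ler_absv_addl x y : v y <= v (x + y) + v x.
Proof.
rewrite -[v x]absvN; have {1}-> : y = (x + y) + - x by rewrite addrC addKr.
exact: ler_absvD.
Qed.

Lemma absv_step_bounds (e : nat) (c : R) (x y lam : algC) :
  0 <= c -> 2 * c <= v lam -> 2 * c * v lam <= 1 ->
  c * Num.max (v x) (v y) ^+ e.+1
    <= Num.max (v (x ^+ e.+1 + lam * y ^+ e.+1)) (v (x * y ^+ e))
    <= (1 + v lam) * Num.max (v x) (v y) ^+ e.+1.
Proof.
move=> c_ge0 c_le_l cl_le1.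
have v_lamy : v (lam * y ^+ e.+1) = v lam * v y ^+ e.+1 by rewrite absvM absvX.
have upper := ler_absvD (x ^+ e.+1) (lam * y ^+ e.+1).
have lower_l := ler_absv_addl (x ^+ e.+1) (lam * y ^+ e.+1).
have lower_r := ler_absv_addl (lam * y ^+ e.+1) (x ^+ e.+1).
rewrite [lam * _ + _]addrC in lower_r.
rewrite v_lamy !absvX in upper lower_l lower_r.
rewrite absvM absvX; apply/andP; split.
  by apply: (@pow_max_le_max R e _ _ (v lam)); rewrite ?absv_ge0.
by apply: (@max_le_pow_max R e _ _ (v lam)); rewrite ?absv_ge0.
Qed.

End AbsoluteValue.

Lemma telescope_geometric_le (R : realFieldType) (D C : R) (L : nat -> R)
    (k0 n0 n : nat) :
  1 < D -> 0 <= C ->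
  (forall k, (k0 <= k)%N -> `|L k.+1 - L k| <= C / D ^+ k.+1) ->
  (k0 <= n0)%N -> (n0 <= n)%N ->
  `|L n - L n0| <= C / (D ^+ n0 * (D - 1)).
Proof.
move=> D_gt1 C_ge0 dL k0_le_n0 n0_le_n.
pose S k := C / (D ^+ k * (D - 1)).
have D_gt0 : 0 < D by apply: lt_trans D_gt1.
have S_ge0 k : 0 <= S k by rewrite divr_ge0 ?mulr_ge0 ?exprn_ge0 // ?subr_ge0 ltW.
have S_step k : S k - S k.+1 = C / D ^+ k.+1.
  rewrite /S exprS; field.
  by rewrite !gt_eqF ?exprn_gt0 ?subr_gt0.
suff partial k : `|L (n0 + k)%N - L n0| <= S n0 - S (n0 + k)%N.
  rewrite -(subnKC n0_le_n) -/(S n0).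
  by have := S_ge0 (n0 + (n - n0))%N; have := partial (n - n0)%N; lra.
elim: k => [|k IHk]; first by rewrite addn0 !subrr normr0.
have := ler_distD (L (n0 + k)%N) (L (n0 + k).+1) (L n0).
have := dL (n0 + k)%N (leq_trans k0_le_n0 (leq_addr k n0)).
have := S_step (n0 + k)%N.
rewrite addnS; lra.
Qed.

Section LogGrowth.
Variables (R : realType) (d : nat) (r : R).
Hypotheses (d_gt1 : (1 < d)%N) (r_ge1 : 1 <= r).

Lemma ln_sub_lnXn_le (x y : R) :
  0 <= x -> r^-1 * x ^+ d <= y <= r * x ^+ d -> `|ln y - ln x *+ d| <= ln r.
Proof.
move=> x_ge0 /andP[y_ge y_le].
have r_gt0 : 0 < r by apply: lt_le_trans r_ge1.
have [x_gt0|x_le0] := ltP 0 x; last first.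
  have x0 : x = 0 by apply/le_anti; rewrite x_le0 x_ge0.
  have y_le0 : y <= 0 by rewrite x0 expr0n gtn_eqF ?(ltn_trans _ d_gt1) // mulr0 in y_le.
  by rewrite (ln0 y_le0) (ln0 x_le0) mul0rn subrr normr0 ln_ge0.
have xd_gt0 : 0 < x ^+ d := exprn_gt0 d x_gt0.
have y_gt0 : 0 < y by apply: lt_le_trans y_ge; rewrite mulr_gt0 ?invr_gt0.
have hi : ln y <= ln r + ln x *+ d.
  by rewrite -lnXn // -lnM ?posrE // ler_ln ?posrE ?mulr_gt0.
have lo : - ln r + ln x *+ d <= ln y.
  rewrite -lnV ?posrE // -lnXn // -lnM ?posrE ?invr_gt0 //.
  by rewrite ler_ln ?posrE ?mulr_gt0 ?invr_gt0.
by rewrite ler_norml; apply/andP; split; lra.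
Qed.

Lemma ln_normalized_sub_le (u : nat -> R) (k0 n0 n : nat) :
  (forall k, 0 <= u k) ->
  (forall k, (k0 <= k)%N -> r^-1 * u k ^+ d <= u k.+1 <= r * u k ^+ d) ->
  (k0 <= n0)%N -> (n0 <= n)%N ->
  `|ln (u n) / d%:R ^+ n - ln (u n0) / d%:R ^+ n0|
    <= ln r / (d%:R ^+ n0 * (d%:R - 1)).
Proof.
move=> u_ge0 u_step k0_le_n0 n0_le_n.
have D_gt1 : 1 < (d%:R : R) by rewrite ltr1n.
have D_gt0 : 0 < (d%:R : R) by apply: lt_trans D_gt1.
apply: (@telescope_geometric_le _ _ _ (fun k => ln (u k) / d%:R ^+ k) k0) => //.
  exact: ln_ge0.
move=> k /u_step step.
have -> : ln (u k.+1) / d%:R ^+ k.+1 - ln (u k) / d%:R ^+ k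
    = (ln (u k.+1) - ln (u k) *+ d) / d%:R ^+ k.+1.
  by rewrite -mulr_natl exprS; field; rewrite mulr1 !gt_eqF ?exprn_gt0.
rewrite normrM [`|_^-1|]ger0_norm ?invr_ge0 ?exprn_ge0 ?ler0n //.
by rewrite ler_pM2r ?invr_gt0 ?exprn_gt0 // ln_sub_lnXn_le.
Qed.

End LogGrowth.

Lemma Mnv_step_bounds (R : realType) (v : algC -> R) (d : nat)
    (A B : {poly algC}) (lam : algC) (c : R) (k : nat) :
  is_absolute_value v -> (0 < d)%N -> (0 < k)%N ->
  0 <= c -> 2 * c <= v lam -> 2 * c * v lam <= 1 ->
  c * Mnv v d A B k lam ^+ d <= Mnv v d A B k.+1 lam
    <= (1 + v lam) * Mnv v d A B k lam ^+ d.
Proof.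
move=> hv; case: d => [|e] // _; case: k => [|k] // _.
rewrite /Mnv (_ : ABc e.+1 A B k.+2 = ABstep e.+1 (ABc e.+1 A B k.+1)) //.
rewrite /ABstep /= !hornerE.
exact: absv_step_bounds.
Qed.

Theorem proposition5p2 (R : realType) (d : nat) (A B : {poly algC})
    (lam : algC) (v : algC -> R) (m M : R) (n0 n : nat) :
  (2 <= d)%N -> A != 0 -> B != 0 -> coprimep A B ->
  lam != 0 -> is_absolute_value v ->
  0 < m -> m <= 1 -> 1 <= M -> m <= v lam -> v lam <= M ->
  (1 <= n0)%N -> (n0 <= n)%N ->
  `| ln (Mnv v d A B n lam) / d%:R ^+ n - ln (Mnv v d A B n0 lam) / d%:R ^+ n0 |
    <= (ln (2 * M) - ln m) / (d%:R ^+ n0 * (d%:R - 1)).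
Proof.
move=> d_ge2 _ _ _ _ hv m_gt0 m_le1 M_ge1 m_le_lam lam_le_M n0_ge1 n0_le_n.
have M_gt0 : 0 < M by apply: lt_le_trans M_ge1.
have r_ge1 : 1 <= 2 * M / m by rewrite ler_pdivlMr // mul1r; lra.
rewrite -ln_div ?posrE ?mulr_gt0 //.
apply: (@ln_normalized_sub_le _ _ _ d_ge2 r_ge1 (fun k => Mnv v d A B k lam) 1) => //.
  by move=> k; rewrite /Mnv le_max absv_ge0.
move=> k k_gt0; rewrite invf_div.
have c_eq : 2 * (m / (2 * M)) = m / M by field; rewrite gt_eqF.
have c_ge0 : 0 <= m / (2 * M) by rewrite divr_ge0 ?ltW ?mulr_gt0.
have c_le_lam : 2 * (m / (2 * M)) <= v lam by rewrite c_eq ler_pdivrMr //; nra.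
have cl_le1 : 2 * (m / (2 * M)) * v lam <= 1.
  by rewrite c_eq mulrAC ler_pdivrMr // mul1r; nra.
have /andP[-> hi] := @Mnv_step_bounds _ _ _ A B _ _ k hv (ltnW d_ge2) k_gt0
  c_ge0 c_le_lam cl_le1.
rewrite (le_trans hi) // ler_wpM2r ?exprn_ge0 ?le_max ?absv_ge0 //.
by rewrite ler_pdivlMr //; nra.
Qed.
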